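(* Let $G=(V,E)$ be a connected simple graph and let $\pi:V\to\mathbb{N}$ be any injection. Then the graph $G^{(\pi)}$ is connected.
   Context: For a vertex $u$, $N(u)=\{v\in V: uv\in E\}$ is its open neighbourhood. Given an injection $\pi:V\to\mathbb{N}$ (an ordering of the vertices), an ordered pair $(u,v)\in V^2$ is called good with respect to $\pi$ if $uv\in E$, $\pi(u)<\pi(v)$, and $\pi(u)<\pi(w)$ for every $w\in N(u)\cap N(v)$. The graph $G^{(\pi)}=(V,E^{(\pi)})$ is the spanning subgraph of $G$ with edge set $E^{(\pi)}=\{\{u,v\}: (u,v)\text{ is good with respect to }\pi\}$. *)

From mathcomp Require Import all_boot.
Set Implicit Arguments. Unset Strict Implicit. Unset Printing Implicit Defensive.

Definition simple_graph (V : finType) (e : rel V) : Prop := symmetric e /\ irreflexive e.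

Definition connected_graph (V : finType) (e : rel V) : Prop := forall x y : V, connect e x y.

Definition good (V : finType) (e : rel V) (pi : V -> nat) (u v : V) : bool :=
  [&& e u v, pi u < pi v & [forall w, (e u w && e v w) ==> (pi u < pi w)]].

Definition Gpi (V : finType) (e : rel V) (pi : V -> nat) : rel V :=
  fun u v => good e pi u v || good e pi v u.

From mathcomp Require Import all_boot.
From mathcomp Require Import zify.

(* Every edge [uv] of [G] is joined by a path of [G^(pi)], by strong induction
   on [pi u + pi v]: if [pi u < pi v] and [(u, v)] is not good, a common
   neighbour [w] has [pi w < pi u], so both edges [uw] and [wv] have smaller
   weight.  Connectivity of [G] then transfers to [G^(pi)]. *)

Section GoodEdges.

Variables (V : finType) (e : rel V) (pi : V -> nat).
Hypotheses (e_sym : symmetric e) (e_irr : irreflexive e) (pi_inj : injective pi).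

Lemma Gpi_sym : symmetric (Gpi e pi).
Proof. by move=> u v; rewrite /Gpi orbC. Qed.

Lemma edge_pi_neq {u v : V} : e u v -> pi u != pi v.
Proof. by apply: contraTneq => /pi_inj->; rewrite e_irr. Qed.

Lemma not_good_common_neighbour {u v : V} :
  e u v -> pi u < pi v -> ~~ good e pi u v ->
  exists2 w, e u w && e w v & pi w < pi u.
Proof.
move=> euv lt_uv; rewrite /good euv lt_uv /= => /forallPn [w].
rewrite negb_imply -leqNgt => /andP [/andP [euw evw] le_wu].
exists w; first by rewrite euw e_sym.
by rewrite ltn_neqAle le_wu andbT edge_pi_neq // e_sym.
Qed.

Lemma edge_connect_Gpi (u v : V) : e u v -> connect (Gpi e pi) u v.
Proof.
move=> euv; have [n] := ubnP (pi u + pi v).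
elim: n => // n IH in u v euv *; rewrite ltnS => le_sum.
wlog lt_uv : u v euv le_sum / pi u < pi v => [hwlog|].
  have [||eq_uv] := ltngtP (pi u) (pi v); first exact: hwlog.
    by move=> lt_vu; rewrite (sym_connect_sym Gpi_sym) hwlog 1?e_sym 1?addnC.
  by move/eqP: eq_uv; rewrite (negPf (edge_pi_neq euv)).
have [good_uv|] := boolP (good e pi u v); first by rewrite connect1 // /Gpi good_uv.
case/(not_good_common_neighbour euv lt_uv) => w /andP [euw ewv] lt_wu.
by apply: (connect_trans (y := w)); apply: IH => //; lia.
Qed.

End GoodEdges.

Theorem lemma2 (V : finType) (e : rel V) (pi : V -> nat) :
  simple_graph e -> connected_graph e -> injective pi ->
  connected_graph (Gpi e pi).
Proof.
move=> [e_sym e_irr] e_conn pi_inj x y.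
apply: (connect_sub (e := e)); last exact: e_conn.
by move=> u v; apply: edge_connect_Gpi.
Qed.
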